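(* Let $w$ be an ESG world and $w_t$ the corresponding time-extended t-ESG world. Let $\alpha$ be a sentence of ESG. Then for every finite timed trace $z_t$ and the untimed trace $z=\mathrm{sym}(z_t)$: $$w,z\models_{\mathrm{ESG}}\alpha \iff w_t,z_t\models_{\text{t-ESG}}\alpha .$$
   Context: The logic t-ESG. Sorts object, action, clock, time; standard names $\mathcal N_O,\mathcal N_A,\mathcal N_C$ (countably infinite) and time names $\mathbb Q_{\ge0}$; variables of sorts object, action, clock; fluent and rigid function and predicate symbols (action- and clock-valued functions rigid); distinguished fluent predicates $\mathit{Poss}$, $\mathit{reset}$, $g$. Terms built from variables, names and function symbols; primitive terms/formulas are symbols applied to names. Situation formulas: $P(\vec t)$, $t_1=t_2$, $c\bowtie r$ ($c$ clock term), $r\bowtie r'$ ($r,r'\in\mathbb Q_{\ge0}$, $\bowtie\in\{<,\le,=,\ge,>\}$), closed under $\wedge,\neg,\forall$, $\square\alpha$, $[\delta]\alpha$, $[\![\delta]\!]\phi$, $[\![\delta]\!]^{<\infty}\phi$; trace formulas: situation formulas closed under $\wedge,\neg,\forall$, $\phi\,\mathcal U_I\,\psi$ ($I$ interval with natural/$\infty$ endpoints). Programs $\delta::=t\mid\alpha?\mid\delta_1;\delta_2\mid\delta_1|\delta_2\mid\delta_1\|\delta_2\mid\delta^*$ ($t$ action term, $\alpha$ static: no $[\cdot],[\![\cdot]\!],\square$). Timed traces $t_1p_1t_2p_2\cdots$ with non-decreasing $t_i\in\mathbb R_{\ge0}$, $p_i\in\mathcal N_A$; $\mathcal Z$ finite,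 $\mathcal T$ all; $(p_1,t_1)\cdots(p_k,t_k)$ denotes $t_1p_1\cdots t_kp_k$; $\mathrm{time}(z)$ = time of last action ($0$ for $\langle\rangle$). A t-ESG world maps (primitive term, finite trace) to a name of the right sort, (primitive formula, finite trace) to $\{0,1\}$, (clock name, finite trace) to $\mathbb R_{\ge0}$, with rigidity, unique names for actions and clocks, $w[c,\langle\rangle]=0$, $w[c,z\cdot t]=w[c,z]+t-\mathrm{time}(z)$, $w[c,z\cdot p]=0$ if $w[\mathit{reset}(c),z\cdot p]=1$ else $w[c,z]$. Denotation $|f(\vec t)|^z_w=w[f(|\vec t|^z_w),z]$. Transitions given $w$: a time step $\langle z,\delta\rangle\to\langle z\cdot t,\delta\rangle$ with $t\ge\mathrm{time}(z)$ followed by an action step $\to_s$, the least relation with $\langle z,a\rangle\to_s\langle z\cdot|a|^z_w,\top?\rangle$; $\langle z,\delta_1;\delta_2\rangle\to_s\langle zp,\gamma;\delta_2\rangle$ if $\langle z,\delta_1\rangle\to_s\langle zp,\gamma\rangle$; $\langle z,\delta_1;\delta_2\rangle\to_s\langle zp,\delta'\rangle$ if $\langle z,\delta_1\rangle$ final and $\langle z,\delta_2\rangle\to_s\langle zp,\delta'\rangle$; $|$: either branch; $\langle z,\delta^*\rangle\to_s\langle zp,\gamma;\delta^*\rangle$ if $\langle z,\delta\rangle\to_s\langle zp,\gamma\rangle$; $\|$: either component steps, other unchanged. Final: $\langle z,\alpha?\rangle$ iff $w,z\models\alpha$; $;$,$\|$ both final; $|$ one final; $\delta^*$ always. $\|\delta\|^z_w$: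 finite $z'$ with $\langle z,\delta\rangle\to^*\langle zz',\delta'\rangle$ final, and infinite traces realized by an infinite transition sequence never visiting a final configuration. Truth: $F(\vec t)$ via $w[F(\vec n),z]$; equality of denotations; $c\bowtie r$ iff $w[c,z]\bowtie r$; usual connectives; $\forall$ substitutional over names; $\square\alpha$: all finite extensions; $[\delta]\alpha$: all finite $z'\in\|\delta\|^z_w$ give $w,zz'\models\alpha$; $[\![\delta]\!]\phi$: $w,z,\tau\models\phi$ for all $\tau\in\|\delta\|^z_w$; $[\![\delta]\!]^{<\infty}$: finite ones. $w,z,\tau\models\alpha$ iff $w,z\models\alpha$ for situation formulas; $w,z,\tau\models\phi\,\mathcal U_I\,\psi$ iff $\tau=z_1\tau'$, $z_1=(p_1,t_1)\cdots(p_k,t_k)$ nonempty, $w,zz_1,\tau'\models\psi$, $\mathrm{time}(z_1)\in\mathrm{time}(z)+I$, and $w,zz_2,z_3\tau'\models\phi$ for all splits $z_1=z_2z_3$ into nonempty time–action sequences. The logic ESG. Its language: t-ESG formulas mentioning only object and action terms, no clock terms, not mentioning $g$ or $\mathit{reset}$, and using $\mathcal U_I$ only with $I=[0,\infty)$ (written $\mathcal U$). ESG traces are finite or infinite sequences $p_1p_2\cdots$ of action names. An ESG world maps (primitive object/action term, finite ESG trace) to names and (primitive formula, finite ESG trace) to $\{0,1\}$, with rigidity and unique names for actions. ESG transitions are just the action steps above (no time steps), final configurations and program traces are defined analogously, and truth $\models_{\mathrm{ESG}}$ is defined by the same clauses (without clocks), with $w,z,\tau\models\phi\,\mathcal U\,\psi$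 iff $\tau=z_1\tau'$ for nonempty $z_1$, $w,zz_1,\tau'\models\psi$ and $w,zz_2,z_3\tau'\models\phi$ for all splits $z_1=z_2z_3$ with $z_2,z_3$ nonempty. Symbolic trace: $\mathrm{sym}((p_1,t_1)\cdots(p_n,t_n))=p_1\cdots p_n$ (time points omitted). Time-extended world: for an ESG world $w$, $w_t$ is the t-ESG world with $w_t[P(\vec n),z_t]=w[P(\vec n),\mathrm{sym}(z_t)]$ for every primitive formula, $w_t[f(\vec n),z_t]=w[f(\vec n),\mathrm{sym}(z_t)]$ for every primitive term, and clock values chosen in any way satisfying the t-ESG world constraints. *)

From Stdlib Require Import Reals QArith Qreals List Bool.
Import ListNotations.
Open Scope R_scope.

(* sorts of terms (time has only names, no variables/terms) *)
Inductive sort := SObj | SAct | SClk.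

Inductive name := NObj (n : nat) | NAct (n : nat) | NClk (n : nat).

Definition name_sort (n : name) : sort :=
  match n with NObj _ => SObj | NAct _ => SAct | NClk _ => SClk end.

Record fsym := { fid : nat; fargs : list sort; fres : sort; frigid : bool }.

Definition is_rigid_f (f : fsym) : Prop := frigid f = true \/ fres f <> SObj.

Inductive psym :=
| PPoss
| PReset
| PG (args : list sort)
| PUser (id : nat) (args : list sort) (rigid : bool).

Definition psym_args (P : psym) : list sort :=
  match P with
  | PPoss => [SAct] | PReset => [SClk] | PG a => a | PUser _ a _ => a
  end.

Definition psym_rigid (P : psym) : bool :=
  match P with PUser _ _ r => r | _ => false end.

Inductive term :=
| TVar (s : sort) (x : nat)
| TName (n : name)
| TFun (f : fsym) (args : list term).

Inductive cmp := CLt | CLe | CEq | CGe | CGt.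

Definition cmpR (op : cmp) (x y : R) : Prop :=
  match op with
  | CLt => x < y | CLe => x <= y | CEq => x = y | CGe => x >= y | CGt => x > y
  end.

(* intervals with natural / infinite endpoints; [lo_cl], [hi_cl] say whether
   the endpoint is included; [hi = None] means infinity *)
Record interval := { lo : nat; lo_cl : bool; hi : option nat; hi_cl : bool }.

Definition in_interval (I : interval) (r : R) : Prop :=
  (if lo_cl I then INR (lo I) <= r else INR (lo I) < r) /\
  match hi I with
  | None => True
  | Some h => if hi_cl I then r <= INR h else r < INR h
  end.

Inductive sform :=
| STrue
| SPred (P : psym) (args : list term)
| SEq (t1 t2 : term)
| SClock (c : term) (op : cmp) (r : Q)
| SRat (r1 : Q) (op : cmp) (r2 : Q)
| SAnd (a b : sform)
| SNeg (a : sform)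
| SAll (s : sort) (x : nat) (a : sform)
| SBox (a : sform)
| SBr (d : prog) (a : sform)
| STr (d : prog) (phi : tform)
| STrFin (d : prog) (phi : tform)
with tform :=
| TSit (a : sform)
| TAnd (phi psi : tform)
| TNeg (phi : tform)
| TAll (s : sort) (x : nat) (phi : tform)
| TUntil (I : interval) (phi psi : tform)
with prog :=
| PAct (t : term)
| PTest (a : sform)
| PSeq (d1 d2 : prog)
| PAlt (d1 d2 : prog)
| PConc (d1 d2 : prog)
| PStar (d : prog).

Definition sort_eqb (a b : sort) : bool :=
  match a, b with
  | SObj, SObj | SAct, SAct | SClk, SClk => true | _, _ => false
  end.

Fixpoint wf_term (bnd : list (sort * nat)) (t : term) (s : sort) : Prop :=
  match t with
  | TVar s' x => s' = s /\ In (s', x) bnd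
  | TName n => name_sort n = s
  | TFun f args =>
      fres f = s /\
      (fix go (l : list term) (ss : list sort) : Prop :=
         match l, ss with
         | [], [] => True
         | t :: l', s1 :: ss' => wf_term bnd t s1 /\ go l' ss'
         | _, _ => False
         end) args (fargs f)
  end.

Fixpoint wf_terms (bnd : list (sort * nat)) (l : list term) (ss : list sort) : Prop :=
  match l, ss with
  | [], [] => True
  | t :: l', s1 :: ss' => wf_term bnd t s1 /\ wf_terms bnd l' ss'
  | _, _ => False
  end.

Fixpoint static (a : sform) : Prop :=
  match a with
  | SAnd a b => static a /\ static b
  | SNeg a => static a
  | SAll _ _ a => static a
  | SBox _ | SBr _ _ | STr _ _ | STrFin _ _ => False
  | _ => True
  end.

Fixpoint wf_s (bnd : list (sort * nat)) (a : sform) : Prop :=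
  match a with
  | STrue => True
  | SPred P ts => wf_terms bnd ts (psym_args P)
  | SEq t1 t2 => exists s, wf_term bnd t1 s /\ wf_term bnd t2 s
  | SClock c _ r => wf_term bnd c SClk /\ (0 <= r)%Q
  | SRat r1 _ r2 => (0 <= r1)%Q /\ (0 <= r2)%Q
  | SAnd a b => wf_s bnd a /\ wf_s bnd b
  | SNeg a => wf_s bnd a
  | SAll s x a => wf_s ((s, x) :: bnd) a
  | SBox a => wf_s bnd a
  | SBr d a => wf_p bnd d /\ wf_s bnd a
  | STr d phi => wf_p bnd d /\ wf_t bnd phi
  | STrFin d phi => wf_p bnd d /\ wf_t bnd phi
  end
with wf_t (bnd : list (sort * nat)) (phi : tform) : Prop :=
  match phi with
  | TSit a => wf_s bnd a
  | TAnd p q => wf_t bnd p /\ wf_t bnd q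
  | TNeg p => wf_t bnd p
  | TAll s x p => wf_t ((s, x) :: bnd) p
  | TUntil _ p q => wf_t bnd p /\ wf_t bnd q
  end
with wf_p (bnd : list (sort * nat)) (d : prog) : Prop :=
  match d with
  | PAct t => wf_term bnd t SAct
  | PTest a => static a /\ wf_s bnd a
  | PSeq d1 d2 | PAlt d1 d2 | PConc d1 d2 => wf_p bnd d1 /\ wf_p bnd d2
  | PStar d => wf_p bnd d
  end.

Fixpoint noclock_term (t : term) : Prop :=
  match t with
  | TVar s _ => s <> SClk
  | TName n => name_sort n <> SClk
  | TFun f args =>
      fres f <> SClk /\
      (fix go (l : list term) : Prop :=
         match l with [] => True | t :: l' => noclock_term t /\ go l' end) args
  end.

Definition until_esg (I : interval) : Prop :=
  lo I = 0%nat /\ lo_cl I = true /\ hi I = None.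

Fixpoint esg_s (a : sform) : Prop :=
  match a with
  | STrue => True
  | SPred P ts =>
      (match P with PReset | PG _ => False | _ => True end) /\ Forall noclock_term ts
  | SEq t1 t2 => noclock_term t1 /\ noclock_term t2
  | SClock _ _ _ | SRat _ _ _ => False
  | SAnd a b => esg_s a /\ esg_s b
  | SNeg a => esg_s a
  | SAll s _ a => s <> SClk /\ esg_s a
  | SBox a => esg_s a
  | SBr d a => esg_p d /\ esg_s a
  | STr d phi | STrFin d phi => esg_p d /\ esg_t phi
  end
with esg_t (phi : tform) : Prop :=
  match phi with
  | TSit a => esg_s a
  | TAnd p q => esg_t p /\ esg_t q
  | TNeg p => esg_t p
  | TAll s _ p => s <> SClk /\ esg_t p
  | TUntil Iv p q => until_esg Iv /\ esg_t p /\ esg_t q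
  end
with esg_p (d : prog) : Prop :=
  match d with
  | PAct t => noclock_term t
  | PTest a => esg_s a
  | PSeq d1 d2 | PAlt d1 d2 | PConc d1 d2 => esg_p d1 /\ esg_p d2
  | PStar d => esg_p d
  end.

Definition esg_sentence (a : sform) : Prop := wf_s [] a /\ esg_s a.

Definition env := sort -> nat -> option name.
Definition env0 : env := fun _ _ => None.
Definition upd (rho : env) (s : sort) (x : nat) (n : name) : env :=
  fun s' x' => if sort_eqb s s' && Nat.eqb x x' then Some n else rho s' x'.

Fixpoint den (F : fsym -> list name -> name) (rho : env) (t : term) : option name :=
  match t with
  | TVar s x => rho s x
  | TName n => Some n
  | TFun f args =>
      option_map (F f)
        ((fix go (l : list term) : option (list name) :=
            match l with
            | [] => Some []
            | t :: l' =>
                match den F rho t, go l' with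
                | Some n, Some ns => Some (n :: ns)
                | _, _ => None
                end
            end) args)
  end.

Fixpoint dens (F : fsym -> list name -> name) (rho : env) (l : list term)
  : option (list name) :=
  match l with
  | [] => Some []
  | t :: l' =>
      match den F rho t, dens F rho l' with
      | Some n, Some ns => Some (n :: ns)
      | _, _ => None
      end
  end.

Fixpoint final (tst : sform -> Prop) (d : prog) : Prop :=
  match d with
  | PAct _ => False
  | PTest a => tst a
  | PSeq d1 d2 => final tst d1 /\ final tst d2
  | PConc d1 d2 => final tst d1 /\ final tst d2
  | PAlt d1 d2 => final tst d1 \/ final tst d2
  | PStar _ => True
  end.

Inductive astep (dn : term -> option name) (tst : sform -> Prop)
  : prog -> nat -> prog -> Prop :=
| as_act t p : dn t = Some (NAct p) -> astep dn tst (PAct t) p (PTest STrue)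
| as_seq1 d1 d2 p g :
    astep dn tst d1 p g -> astep dn tst (PSeq d1 d2) p (PSeq g d2)
| as_seq2 d1 d2 p d' :
    final tst d1 -> astep dn tst d2 p d' -> astep dn tst (PSeq d1 d2) p d'
| as_alt1 d1 d2 p d' : astep dn tst d1 p d' -> astep dn tst (PAlt d1 d2) p d'
| as_alt2 d1 d2 p d' : astep dn tst d2 p d' -> astep dn tst (PAlt d1 d2) p d'
| as_star d p g : astep dn tst d p g -> astep dn tst (PStar d) p (PSeq g (PStar d))
| as_conc1 d1 d2 p g :
    astep dn tst d1 p g -> astep dn tst (PConc d1 d2) p (PConc g d2)
| as_conc2 d1 d2 p g :
    astep dn tst d2 p g -> astep dn tst (PConc d1 d2) p (PConc d1 g).

Section LTS.
(* Tr: situation traces; L: labels of a (full) transition *)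
Variables (Tr L : Type) (ext : Tr -> L -> Tr)
          (step : Tr -> prog -> L -> prog -> Prop)
          (fin : Tr -> prog -> Prop).

Fixpoint extend (z : Tr) (ls : list L) : Tr :=
  match ls with [] => z | l :: ls' => extend (ext z l) ls' end.

Inductive run : Tr -> prog -> list L -> prog -> Prop :=
| run_nil z d : run z d [] d
| run_cons z d l d' ls d'' :
    step z d l d' -> run (ext z l) d' ls d'' -> run z d (l :: ls) d''.

Definition fin_trace (z : Tr) (d : prog) (ls : list L) : Prop :=
  exists d', run z d ls d' /\ fin (extend z ls) d'.

Definition prefix (s : nat -> L) (n : nat) : list L := map s (seq 0 n).

Definition inf_trace (z : Tr) (d : prog) (s : nat -> L) : Prop :=
  exists ds : nat -> prog, ds 0%nat = d /\
    forall i, step (extend z (prefix s i)) (ds i) (s i) (ds (S i)) /\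
              ~ fin (extend z (prefix s i)) (ds i).
End LTS.
Arguments extend {Tr L}.
Arguments run {Tr L}.
Arguments fin_trace {Tr L}.
Arguments prefix {L}.
Arguments inf_trace {Tr L}.

Inductive ptrace (L : Type) := PFin (l : list L) | PInf (s : nat -> L).
Arguments PFin {L}.
Arguments PInf {L}.

Definition in_traces {Tr L : Type} (ext : Tr -> L -> Tr)
  (step : Tr -> prog -> L -> prog -> Prop) (fin : Tr -> prog -> Prop)
  (z : Tr) (d : prog) (tau : ptrace L) : Prop :=
  match tau with
  | PFin l => fin_trace ext step fin z d l
  | PInf s => inf_trace ext step fin z d s
  end.

Definition tsplit {L : Type} (tau : ptrace L) (z1 : list L) (tau' : ptrace L) : Prop :=
  match tau, tau' with
  | PFin l, PFin l' => l = z1 ++ l'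
  | PInf s, PInf s' =>
      z1 = prefix s (length z1) /\ forall i, s' i = s (length z1 + i)%nat
  | _, _ => False
  end.

Definition tprepend {L : Type} (z3 : list L) (tau' : ptrace L) : ptrace L :=
  match tau' with
  | PFin l => PFin (z3 ++ l)
  | PInf s => PInf (fun i => if Nat.ltb i (length z3) then nth i z3 (s 0%nat)
                             else s (i - length z3)%nat)
  end.

(* finite timed traces t1 p1 t2 p2 ... as event lists (a trace may end with
   a time point, as in the intermediate configurations z·t) *)
Inductive tev := EvTime (r : R) | EvAct (p : nat).

Fixpoint tvalid_from (t0 : R) (z : list tev) : Prop :=
  match z with
  | [] => True
  | [EvTime r] => t0 <= r
  | EvTime r :: EvAct _ :: z' => t0 <= r /\ tvalid_from r z'
  | _ => False
  end.
Definition tvalid (z : list tev) : Prop := tvalid_from 0 z.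

(* time of the last action (0 if none) *)
Fixpoint time_aux (acc : R) (z : list tev) : R :=
  match z with
  | [] => acc
  | EvTime r :: ((EvAct _ :: _) as z') => time_aux r z'
  | _ :: z' => time_aux acc z'
  end.
Definition time_of (z : list tev) : R := time_aux 0 z.

Definition embed (zt : list (R * nat)) : list tev :=
  flat_map (fun e => [EvTime (fst e); EvAct (snd e)]) zt.

Definition text (z : list tev) (e : R * nat) : list tev :=
  z ++ [EvTime (fst e); EvAct (snd e)].

Fixpoint sym (z : list tev) : list nat :=
  match z with
  | [] => []
  | EvAct p :: z' => p :: sym z'
  | EvTime _ :: z' => sym z'
  end.

Record tworld := {
  tw_fun : fsym -> list name -> list tev -> name;
  tw_pred : psym -> list name -> list tev -> bool;
  tw_clock : nat -> list tev -> R }.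

Definition tworld_ok (w : tworld) : Prop :=
  (forall f ns z, map name_sort ns = fargs f -> name_sort (tw_fun w f ns z) = fres f) /\
  (forall f ns z z', map name_sort ns = fargs f -> is_rigid_f f ->
      tw_fun w f ns z = tw_fun w f ns z') /\
  (forall P ns z z', map name_sort ns = psym_args P -> psym_rigid P = true ->
      tw_pred w P ns z = tw_pred w P ns z') /\
  (forall f f' ns ns' z, map name_sort ns = fargs f -> map name_sort ns' = fargs f' ->
      (fres f = SAct \/ fres f = SClk) -> fres f' = fres f ->
      tw_fun w f ns z = tw_fun w f' ns' z -> f = f' /\ ns = ns') /\
  (forall c z, tvalid z -> 0 <= tw_clock w c z) /\
  (forall c, tw_clock w c [] = 0) /\
  (forall c z t, tvalid (z ++ [EvTime t]) ->
      tw_clock w c (z ++ [EvTime t]) = tw_clock w c z + t - time_of z) /\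
  (forall c z p, tvalid (z ++ [EvAct p]) ->
      tw_clock w c (z ++ [EvAct p]) =
        if tw_pred w PReset [NClk c] (z ++ [EvAct p]) then 0 else tw_clock w c z).

Fixpoint tsat_static (w : tworld) (rho : env) (z : list tev) (a : sform) : Prop :=
  let F := fun f ns => tw_fun w f ns z in
  match a with
  | STrue => True
  | SPred P ts => exists ns, dens F rho ts = Some ns /\ tw_pred w P ns z = true
  | SEq t1 t2 => exists n, den F rho t1 = Some n /\ den F rho t2 = Some n
  | SClock c op r =>
      exists k, den F rho c = Some (NClk k) /\ cmpR op (tw_clock w k z) (Q2R r)
  | SRat r1 op r2 => cmpR op (Q2R r1) (Q2R r2)
  | SAnd a b => tsat_static w rho z a /\ tsat_static w rho z b
  | SNeg a => ~ tsat_static w rho z a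
  | SAll s x a => forall n, name_sort n = s -> tsat_static w (upd rho s x n) z a
  | _ => False
  end.

(* a transition: time step to z·t (t >= time(z)) followed by an action step *)
Definition tstep (w : tworld) (rho : env) (z : list tev) (d : prog)
  (e : R * nat) (d' : prog) : Prop :=
  let zt := z ++ [EvTime (fst e)] in
  time_of z <= fst e /\
  astep (den (fun f ns => tw_fun w f ns zt) rho) (tsat_static w rho zt) d (snd e) d'.

Definition tfinal (w : tworld) (rho : env) (z : list tev) (d : prog) : Prop :=
  final (tsat_static w rho z) d.

Fixpoint tsat (w : tworld) (rho : env) (z : list tev) (a : sform) {struct a} : Prop :=
  let F := fun f ns => tw_fun w f ns z in
  match a with
  | STrue => True
  | SPred P ts => exists ns, dens F rho ts = Some ns /\ tw_pred w P ns z = true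
  | SEq t1 t2 => exists n, den F rho t1 = Some n /\ den F rho t2 = Some n
  | SClock c op r =>
      exists k, den F rho c = Some (NClk k) /\ cmpR op (tw_clock w k z) (Q2R r)
  | SRat r1 op r2 => cmpR op (Q2R r1) (Q2R r2)
  | SAnd a b => tsat w rho z a /\ tsat w rho z b
  | SNeg a => ~ tsat w rho z a
  | SAll s x a => forall n, name_sort n = s -> tsat w (upd rho s x n) z a
  | SBox a => forall z', tvalid (z ++ embed z') -> tsat w rho (z ++ embed z') a
  | SBr d a => forall ls, fin_trace text (tstep w rho) (tfinal w rho) z d ls ->
                          tsat w rho (extend text z ls) a
  | STr d phi => forall tau, in_traces text (tstep w rho) (tfinal w rho) z d tau ->
                             tsat_tr w rho z tau phi
  | STrFin d phi => forall ls, fin_trace text (tstep w rho) (tfinal w rho) z d ls ->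
                               tsat_tr w rho z (PFin ls) phi
  end
with tsat_tr (w : tworld) (rho : env) (z : list tev) (tau : ptrace (R * nat))
  (phi : tform) {struct phi} : Prop :=
  match phi with
  | TSit a => tsat w rho z a
  | TAnd p q => tsat_tr w rho z tau p /\ tsat_tr w rho z tau q
  | TNeg p => ~ tsat_tr w rho z tau p
  | TAll s x p => forall n, name_sort n = s -> tsat_tr w (upd rho s x n) z tau p
  | TUntil Iv p q =>
      exists z1 tau', z1 <> [] /\ tsplit tau z1 tau' /\
        tsat_tr w rho (z ++ embed z1) tau' q /\
        in_interval Iv (time_of (z ++ embed z1) - time_of z) /\
        forall z2 z3, z2 <> [] -> z3 <> [] -> z1 = z2 ++ z3 ->
          tsat_tr w rho (z ++ embed z2) (tprepend z3 tau') p
  end.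

Record eworld := {
  ew_fun : fsym -> list name -> list nat -> name;
  ew_pred : psym -> list name -> list nat -> bool }.

Definition eworld_ok (w : eworld) : Prop :=
  (forall f ns z, map name_sort ns = fargs f -> fres f <> SClk ->
      name_sort (ew_fun w f ns z) = fres f) /\
  (forall f ns z z', map name_sort ns = fargs f -> fres f <> SClk -> is_rigid_f f ->
      ew_fun w f ns z = ew_fun w f ns z') /\
  (forall P ns z z', map name_sort ns = psym_args P -> psym_rigid P = true ->
      ew_pred w P ns z = ew_pred w P ns z') /\
  (forall f f' ns ns' z, map name_sort ns = fargs f -> map name_sort ns' = fargs f' ->
      fres f = SAct -> fres f' = SAct ->
      ew_fun w f ns z = ew_fun w f' ns' z -> f = f' /\ ns = ns').

Fixpoint esat_static (w : eworld) (rho : env) (z : list nat) (a : sform) : Prop :=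
  let F := fun f ns => ew_fun w f ns z in
  match a with
  | STrue => True
  | SPred P ts => exists ns, dens F rho ts = Some ns /\ ew_pred w P ns z = true
  | SEq t1 t2 => exists n, den F rho t1 = Some n /\ den F rho t2 = Some n
  | SAnd a b => esat_static w rho z a /\ esat_static w rho z b
  | SNeg a => ~ esat_static w rho z a
  | SAll s x a => forall n, name_sort n = s -> esat_static w (upd rho s x n) z a
  | _ => False
  end.

Definition eext (z : list nat) (p : nat) : list nat := z ++ [p].

Definition estep (w : eworld) (rho : env) (z : list nat) (d : prog) (p : nat)
  (d' : prog) : Prop :=
  astep (den (fun f ns => ew_fun w f ns z) rho) (esat_static w rho z) d p d'.

Definition efinal (w : eworld) (rho : env) (z : list nat) (d : prog) : Prop :=
  final (esat_static w rho z) d.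

Fixpoint esat (w : eworld) (rho : env) (z : list nat) (a : sform) {struct a} : Prop :=
  let F := fun f ns => ew_fun w f ns z in
  match a with
  | STrue => True
  | SPred P ts => exists ns, dens F rho ts = Some ns /\ ew_pred w P ns z = true
  | SEq t1 t2 => exists n, den F rho t1 = Some n /\ den F rho t2 = Some n
  | SClock _ _ _ | SRat _ _ _ => False   (* not in the ESG language *)
  | SAnd a b => esat w rho z a /\ esat w rho z b
  | SNeg a => ~ esat w rho z a
  | SAll s x a => forall n, name_sort n = s -> esat w (upd rho s x n) z a
  | SBox a => forall z', esat w rho (z ++ z') a
  | SBr d a => forall ls, fin_trace eext (estep w rho) (efinal w rho) z d ls ->
                          esat w rho (extend eext z ls) a
  | STr d phi => forall tau, in_traces eext (estep w rho) (efinal w rho) z d tau ->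
                             esat_tr w rho z tau phi
  | STrFin d phi => forall ls, fin_trace eext (estep w rho) (efinal w rho) z d ls ->
                               esat_tr w rho z (PFin ls) phi
  end
with esat_tr (w : eworld) (rho : env) (z : list nat) (tau : ptrace nat)
  (phi : tform) {struct phi} : Prop :=
  match phi with
  | TSit a => esat w rho z a
  | TAnd p q => esat_tr w rho z tau p /\ esat_tr w rho z tau q
  | TNeg p => ~ esat_tr w rho z tau p
  | TAll s x p => forall n, name_sort n = s -> esat_tr w (upd rho s x n) z tau p
  | TUntil _ p q =>
      exists z1 tau', z1 <> [] /\ tsplit tau z1 tau' /\
        esat_tr w rho (z ++ z1) tau' q /\
        forall z2 z3, z2 <> [] -> z3 <> [] -> z1 = z2 ++ z3 ->
          esat_tr w rho (z ++ z2) (tprepend z3 tau') p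
  end.

(* wt is a time-extended world of w: a t-ESG world agreeing with w (via sym)
   on all primitive formulas and all primitive object/action terms; clock
   values (and clock-valued function symbols) are arbitrary subject to the
   t-ESG world constraints *)
Definition time_ext (w : eworld) (wt : tworld) : Prop :=
  tworld_ok wt /\
  (forall P ns z, map name_sort ns = psym_args P ->
      tw_pred wt P ns z = ew_pred w P ns (sym z)) /\
  (forall f ns z, map name_sort ns = fargs f -> fres f <> SClk ->
      tw_fun wt f ns z = ew_fun w f ns (sym z)).

Definition symt (zt : list (R * nat)) : list nat := map snd zt.

(* An ESG formula mentions neither clocks nor time bounds, and [wt] interprets every
   clock-free term and every predicate at a timed trace exactly as [w] does at its
   symbolic projection.  So truth of an ESG formula at a timed trace depends only on the
   symbolic trace, provided the traces quantified over are matched up: every timed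
   extension projects to a symbolic one, and conversely every symbolic extension, finite
   or infinite, becomes a legal timed one by stamping all its actions with the time of the
   last action so far (time steps may have length zero).  The only until interval of ESG
   is [0, oo), which every elapsed time satisfies.  A structural induction over formulas
   carries both directions, with the invariant that timestamps are nondecreasing. *)

From Stdlib Require Import Reals List Bool Lia Lra FunctionalExtensionality.
Import ListNotations.
Local Open Scope R_scope.

(** * Clock-free terms and static formulas *)

Section TermInd.
Variable P : term -> Prop.
Hypothesis P_var : forall s x, P (TVar s x).
Hypothesis P_name : forall n, P (TName n).
Hypothesis P_fun : forall f args, Forall P args -> P (TFun f args).

Fixpoint term_ind_nested (t : term) : P t :=
  match t with
  | TVar s x => P_var s x
  | TName n => P_name n
  | TFun f args => P_fun f args
      ((fix go (l : list term) : Forall P l :=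
         match l with
         | [] => Forall_nil _
         | t :: l' => Forall_cons _ (term_ind_nested t) (go l')
         end) args)
  end.
End TermInd.

Lemma den_TFun F rho f args :
  den F rho (TFun f args) = option_map (F f) (dens F rho args).
Proof.
  simpl. f_equal. induction args as [|t l IH]; simpl; auto.
  rewrite IH. reflexivity.
Qed.

Lemma wf_term_TFun bnd f args s :
  wf_term bnd (TFun f args) s <-> fres f = s /\ wf_terms bnd args (fargs f).
Proof.
  simpl. split; intros [Hres Hargs]; split; auto; revert Hargs; generalize (fargs f);
  induction args as [|t l IH]; intros [|s1 ss]; simpl; auto;
  intros [Ht Hl]; split; auto; apply IH; auto.
Qed.

Lemma noclock_term_TFun f args :
  noclock_term (TFun f args) <-> fres f <> SClk /\ Forall noclock_term args.
Proof.
  simpl. split; intros [Hres Hargs]; split; auto; induction args as [|t l IH]; simpl in *.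
  - constructor.
  - destruct Hargs. constructor; auto.
  - exact I.
  - inversion Hargs as [|? ? Ht Hl]. split; [exact Ht | exact (IH Hl)].
Qed.

Definition sorted_env (rho : env) (bnd : list (sort * nat)) : Prop :=
  forall s x, In (s, x) bnd -> exists n, rho s x = Some n /\ name_sort n = s.

Lemma sorted_env_nil rho : sorted_env rho [].
Proof. intros s x []. Qed.

Lemma sorted_env_upd rho bnd s x n :
  sorted_env rho bnd -> name_sort n = s -> sorted_env (upd rho s x n) ((s, x) :: bnd).
Proof.
  intros Hrho Hn s' x' Hin. unfold upd.
  destruct (andb (sort_eqb s s') (Nat.eqb x x')) eqn:E.
  - apply andb_prop in E as [Es Ex]. apply Nat.eqb_eq in Ex.
    destruct s, s'; simpl in Es; try discriminate; subst; eauto.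
  - destruct Hin as [Heq | Hin]; auto.
    injection Heq as <- <-. rewrite Nat.eqb_refl, andb_true_r in E.
    destruct s; discriminate.
Qed.

Section DenAgree.
Variables F1 F2 : fsym -> list name -> name.
Hypothesis F12 : forall f ns, map name_sort ns = fargs f -> fres f <> SClk ->
  F1 f ns = F2 f ns /\ name_sort (F1 f ns) = fres f.

Lemma den_agree bnd rho : sorted_env rho bnd -> forall t s,
  wf_term bnd t s -> noclock_term t ->
  exists n, den F1 rho t = Some n /\ den F2 rho t = Some n /\ name_sort n = s.
Proof.
  intros Hrho t. induction t as [s0 x|n|f args IH] using term_ind_nested; intros s Hw Hn.
  - destruct Hw as [-> Hin]. destruct (Hrho _ _ Hin) as [n [E S]]. eauto.
  - simpl in *. eauto.
  - apply wf_term_TFun in Hw as [Hres Hw]. apply noclock_term_TFun in Hn as [Hc Hn].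
    rewrite !den_TFun.
    assert (Hargs : exists ns, dens F1 rho args = Some ns /\ dens F2 rho args = Some ns
              /\ map name_sort ns = fargs f).
    { revert Hw Hn IH. generalize (fargs f).
      induction args as [|t l IHl]; intros [|s1 ss] Hw Hn IH; simpl in Hw; try contradiction.
      - exists []. auto.
      - destruct Hw as [Hw1 Hw2].
        inversion Hn as [|? ? Hnt Hnl]; inversion IH as [|? ? IHt IHl']; subst.
        destruct (IHt _ Hw1 Hnt) as [n [A [B C]]].
        destruct (IHl ss Hw2 Hnl IHl') as [ns [A' [B' C']]].
        exists (n :: ns). simpl. rewrite A, B, A', B'. simpl. rewrite C, C'. auto. }
    destruct Hargs as [ns [E1 [E2 E3]]]. rewrite E1, E2.
    destruct (F12 f ns E3 Hc) as [X Y]. exists (F1 f ns). simpl. rewrite <- X. subst. auto.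
Qed.

Lemma dens_agree bnd rho : sorted_env rho bnd -> forall ts ss,
  wf_terms bnd ts ss -> Forall noclock_term ts ->
  exists ns, dens F1 rho ts = Some ns /\ dens F2 rho ts = Some ns /\ map name_sort ns = ss.
Proof.
  intros Hrho ts. induction ts as [|t l IHl]; intros [|s1 ss] Hw Hn; simpl in Hw; try contradiction.
  - exists []. auto.
  - destruct Hw as [Hw1 Hw2]. inversion Hn as [|? ? Hnt Hnl]; subst.
    destruct (den_agree bnd rho Hrho t s1 Hw1 Hnt) as [n [A [B C]]].
    destruct (IHl ss Hw2 Hnl) as [ns [A' [B' C']]].
    exists (n :: ns). simpl. rewrite A, B, A', B'. simpl. rewrite C, C'. auto.
Qed.
End DenAgree.

Section TimeExtension.
Variables (w : eworld) (wt : tworld).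
Hypothesis Hext : time_ext w wt.

Lemma tw_fun_sym z f ns : map name_sort ns = fargs f -> fres f <> SClk ->
  tw_fun wt f ns z = ew_fun w f ns (sym z) /\ name_sort (tw_fun wt f ns z) = fres f.
Proof. destruct Hext as [[Hsort _] [_ Hfun]]. auto. Qed.

Lemma den_sym z bnd rho t s : sorted_env rho bnd -> wf_term bnd t s -> noclock_term t ->
  den (fun f ns => tw_fun wt f ns z) rho t = den (fun f ns => ew_fun w f ns (sym z)) rho t.
Proof.
  intros Hrho Hw Hn.
  destruct (den_agree _ _ (tw_fun_sym z) bnd rho Hrho t s Hw Hn) as [n [E1 [E2 _]]].
  congruence.
Qed.

Lemma tsat_static_sym z a : forall bnd rho, static a -> esg_s a -> wf_s bnd a ->
  sorted_env rho bnd -> (tsat_static wt rho z a <-> esat_static w rho (sym z) a).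
Proof.
  induction a; intros bnd rho Hs He Hw Hrho; simpl in *; try tauto.
  - destruct He as [_ He].
    destruct (dens_agree _ _ (tw_fun_sym z) bnd rho Hrho args _ Hw He) as [ns [A [B C]]].
    rewrite A, B. destruct Hext as [_ [Hpred _]].
    split; intros [ns0 [E1 E2]]; injection E1 as <-; exists ns; split; auto.
    + rewrite <- Hpred; auto.
    + rewrite Hpred; auto.
  - destruct Hw as [s [Hw1 Hw2]]. destruct He as [Hn1 Hn2].
    rewrite (den_sym z bnd rho t1 s), (den_sym z bnd rho t2 s) by auto. tauto.
  - rewrite (IHa1 bnd rho), (IHa2 bnd rho) by tauto. tauto.
  - rewrite (IHa bnd rho) by tauto. tauto.
  - destruct He as [_ He]. split; intros H n Hn; specialize (H n Hn);
      eapply IHa; eauto using sorted_env_upd.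
Qed.
End TimeExtension.

Definition esg_prog (bnd : list (sort * nat)) (d : prog) : Prop := esg_p d /\ wf_p bnd d.

Section ProgramAgreement.
Variables (dn1 dn2 : term -> option name) (tst1 tst2 : sform -> Prop).
Variable bnd : list (sort * nat).
Hypothesis dn12 : forall t, noclock_term t -> wf_term bnd t SAct -> dn1 t = dn2 t.
Hypothesis tst12 : forall a, static a -> esg_s a -> wf_s bnd a -> (tst1 a <-> tst2 a).

Lemma final_agree d : esg_prog bnd d -> (final tst1 d <-> final tst2 d).
Proof.
  unfold esg_prog. induction d; simpl; intros [He Hw]; try tauto;
    try (apply tst12; tauto); rewrite IHd1, IHd2 by tauto; tauto.
Qed.

Lemma astep_agree d p d' : astep dn1 tst1 d p d' -> esg_prog bnd d -> astep dn2 tst2 d p d'.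
Proof.
  unfold esg_prog. induction 1; simpl; intros [He Hw].
  - constructor. rewrite <- dn12; auto.
  - apply as_seq1; tauto.
  - apply as_seq2; [apply (final_agree d1); unfold esg_prog|]; tauto.
  - apply as_alt1; tauto.
  - apply as_alt2; tauto.
  - apply as_star; tauto.
  - apply as_conc1; tauto.
  - apply as_conc2; tauto.
Qed.
End ProgramAgreement.

Lemma astep_esg_prog dn tst bnd d p d' :
  astep dn tst d p d' -> esg_prog bnd d -> esg_prog bnd d'.
Proof.
  unfold esg_prog. induction 1; simpl; intros [He Hw]; try tauto.
  all: split; split; try tauto; apply IHastep; tauto.
Qed.

(** * Timed traces *)

Definition last_time (c : R) (zt : list (R * nat)) : R := fold_left (fun _ e => fst e) zt c.

Fixpoint nondecr_from (c : R) (zt : list (R * nat)) : Prop :=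
  match zt with [] => True | e :: zt' => c <= fst e /\ nondecr_from (fst e) zt' end.

Lemma last_time_app c a b : last_time c (a ++ b) = last_time (last_time c a) b.
Proof. apply fold_left_app. Qed.

Lemma last_time_snoc c zt e : last_time c (zt ++ [e]) = fst e.
Proof. rewrite last_time_app. reflexivity. Qed.

Lemma nondecr_from_app c a b :
  nondecr_from c (a ++ b) <-> nondecr_from c a /\ nondecr_from (last_time c a) b.
Proof.
  revert c. induction a as [|e a IH]; intros; simpl; [tauto|].
  rewrite IH. tauto.
Qed.

Lemma nondecr_from_last_time c zt : nondecr_from c zt -> c <= last_time c zt.
Proof.
  revert c. induction zt as [|e zt IH]; intros c H; simpl in *; [lra|].
  destruct H as [H1 H2]. specialize (IH _ H2). unfold last_time in *. simpl. lra.
Qed.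

Lemma nondecr_from_firstn c zt n : nondecr_from c zt -> nondecr_from c (firstn n zt).
Proof.
  revert c n. induction zt as [|e zt IH]; intros c [|n] H; simpl in *; auto.
  destruct H; split; auto.
Qed.

Lemma nondecr_from_const c T l : c <= T -> nondecr_from c (map (pair T) l).
Proof.
  revert c. induction l; intros c H; simpl; auto. split; auto. apply IHl; simpl; lra.
Qed.

Lemma last_time_const c T l : c <= T -> last_time c (map (pair T) l) <= T.
Proof.
  revert c. induction l; intros c H; simpl; auto. apply IHl. simpl. lra.
Qed.

Lemma embed_app a b : embed (a ++ b) = embed a ++ embed b.
Proof. apply flat_map_app. Qed.

Lemma tvalid_from_embed c zt : tvalid_from c (embed zt) <-> nondecr_from c zt.
Proof.
  revert c. induction zt as [|[t p] zt IH]; intros; simpl; [tauto|].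
  rewrite IH. tauto.
Qed.

Lemma time_of_embed zt : time_of (embed zt) = last_time 0 zt.
Proof.
  unfold time_of. generalize 0.
  induction zt as [|[t p] zt IH]; intros; simpl; auto.
Qed.

Lemma sym_app a b : sym (a ++ b) = sym a ++ sym b.
Proof. induction a as [|[] a IH]; simpl; auto. rewrite IH; auto. Qed.

Lemma sym_embed zt : sym (embed zt) = symt zt.
Proof. induction zt as [|[t p] zt IH]; simpl; auto. rewrite IH; auto. Qed.

Lemma sym_embed_time zt t : sym (embed zt ++ [EvTime t]) = symt zt.
Proof. rewrite sym_app, sym_embed. apply app_nil_r. Qed.

Lemma symt_app a b : symt (a ++ b) = symt a ++ symt b.
Proof. apply map_app. Qed.

Lemma symt_const T l : symt (map (pair T) l) = l.
Proof. unfold symt. rewrite map_map. apply map_id. Qed.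

Lemma text_embed zt e : text (embed zt) e = embed (zt ++ [e]).
Proof. unfold text. rewrite embed_app. destruct e; auto. Qed.

Lemma extend_text zt ls : extend text (embed zt) ls = embed (zt ++ ls).
Proof.
  revert zt. induction ls as [|e ls IH]; intros; simpl.
  - rewrite app_nil_r; auto.
  - rewrite text_embed, IH, <- app_assoc. auto.
Qed.

Lemma extend_eext z ls : extend eext z ls = z ++ ls.
Proof.
  revert z. induction ls as [|p ls IH]; intros; simpl.
  - rewrite app_nil_r; auto.
  - unfold eext. rewrite IH, <- app_assoc. auto.
Qed.

Lemma symt_time_at zt T l : symt (zt ++ map (pair T) l) = symt zt ++ l.
Proof. rewrite symt_app, symt_const. reflexivity. Qed.

Lemma prefix_length {L} (s : nat -> L) n : length (prefix s n) = n.
Proof. unfold prefix. rewrite length_map, length_seq. auto. Qed.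

Lemma nth_prefix {L} (s : nat -> L) n i d : (i < n)%nat -> nth i (prefix s n) d = s i.
Proof.
  intros H. unfold prefix.
  rewrite nth_indep with (d' := s 0%nat) by (rewrite length_map, length_seq; lia).
  rewrite map_nth, seq_nth by lia. auto.
Qed.

Lemma prefix_add {L} (s : nat -> L) a n :
  prefix s (a + n) = prefix s a ++ prefix (fun i => s (a + i)%nat) n.
Proof.
  apply nth_ext with (d := s 0%nat) (d' := s 0%nat).
  - rewrite length_app, !prefix_length. reflexivity.
  - intros i Hi. rewrite prefix_length in Hi. rewrite nth_prefix by lia.
    destruct (Nat.ltb_spec i a).
    + rewrite app_nth1, nth_prefix by (rewrite ?prefix_length; lia). reflexivity.
    + rewrite app_nth2, nth_prefix by (rewrite ?prefix_length; lia).
      rewrite prefix_length. f_equal. lia.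
Qed.

Lemma map_prefix {L L'} (f : L -> L') (s : nat -> L) n :
  map f (prefix s n) = prefix (fun i => f (s i)) n.
Proof. unfold prefix. rewrite map_map. reflexivity. Qed.

Lemma nondecr_from_extend zt ls :
  nondecr_from 0 zt -> nondecr_from (last_time 0 zt) ls -> nondecr_from 0 (zt ++ ls).
Proof. intros; apply nondecr_from_app; auto. Qed.

Lemma nondecr_from_time_at zt l :
  nondecr_from 0 zt -> nondecr_from 0 (zt ++ map (pair (last_time 0 zt)) l).
Proof. intros; apply nondecr_from_extend, nondecr_from_const; auto; lra. Qed.

Definition ptrace_firstn {L} (n : nat) (tau : ptrace L) : list L :=
  match tau with PFin l => firstn n l | PInf s => prefix s n end.

Definition ptrace_nondecr (c : R) (tau : ptrace (R * nat)) : Prop :=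
  forall n, nondecr_from c (ptrace_firstn n tau).

Definition ptrace_sym (tau : ptrace (R * nat)) : ptrace nat :=
  match tau with PFin l => PFin (symt l) | PInf s => PInf (fun i => snd (s i)) end.

Definition ptrace_at (T : R) (tau : ptrace nat) : ptrace (R * nat) :=
  match tau with PFin l => PFin (map (pair T) l) | PInf s => PInf (fun i => (T, s i)) end.

Lemma tsplit_firstn {L} (tau : ptrace L) z1 tau' : tsplit tau z1 tau' ->
  forall n, ptrace_firstn (length z1 + n) tau = z1 ++ ptrace_firstn n tau'.
Proof.
  destruct tau as [l|s], tau' as [l'|s']; simpl; try tauto.
  - intros -> n. apply firstn_app_2.
  - intros [E1 E2] n. rewrite prefix_add, <- E1. do 2 f_equal.
    apply functional_extensionality. auto.
Qed.

Lemma ptrace_firstn_tprepend {L} (z3 : list L) tau' n :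
  ptrace_firstn n (tprepend z3 tau') = firstn n (z3 ++ ptrace_firstn n tau').
Proof.
  destruct tau' as [l|s]; simpl.
  - rewrite !firstn_app, firstn_firstn. do 2 f_equal. lia.
  - apply nth_ext with (d := s 0%nat) (d' := s 0%nat).
    + rewrite prefix_length, length_firstn, length_app, prefix_length. lia.
    + intros i Hi. rewrite prefix_length in Hi.
      rewrite nth_prefix, nth_firstn by lia.
      destruct (Nat.ltb_spec i n); [|lia]. simpl.
      destruct (Nat.ltb_spec i (length z3)).
      * rewrite app_nth1 by lia. reflexivity.
      * rewrite app_nth2, nth_prefix by lia. reflexivity.
Qed.

Lemma ptrace_nondecr_tsplit c tau z1 tau' : tsplit tau z1 tau' -> ptrace_nondecr c tau ->
  nondecr_from c z1 /\ ptrace_nondecr (last_time c z1) tau'.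
Proof.
  intros Hs Ht. pose proof (tsplit_firstn _ _ _ Hs) as E. split.
  - specialize (Ht (length z1 + 0)%nat). rewrite E, nondecr_from_app in Ht. tauto.
  - intros n. specialize (Ht (length z1 + n)%nat). rewrite E, nondecr_from_app in Ht. tauto.
Qed.

Lemma ptrace_nondecr_tprepend c z3 tau' :
  nondecr_from c z3 -> ptrace_nondecr (last_time c z3) tau' -> ptrace_nondecr c (tprepend z3 tau').
Proof.
  intros H1 H2 n. rewrite ptrace_firstn_tprepend.
  apply nondecr_from_firstn, nondecr_from_app. auto.
Qed.

Lemma ptrace_nondecr_fin c l : nondecr_from c l -> ptrace_nondecr c (PFin l).
Proof. intros H n. apply nondecr_from_firstn; auto. Qed.

Lemma ptrace_nondecr_at c T tau : c <= T -> ptrace_nondecr c (ptrace_at T tau).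
Proof.
  intros H n. destruct tau as [l|s]; simpl.
  - rewrite firstn_map. apply nondecr_from_const; auto.
  - rewrite <- (map_prefix (pair T)). apply nondecr_from_const; auto.
Qed.

Lemma ptrace_sym_at T tau : ptrace_sym (ptrace_at T tau) = tau.
Proof. destruct tau; simpl; rewrite ?symt_const; reflexivity. Qed.

Lemma ptrace_sym_tprepend z3 tau' :
  ptrace_sym (tprepend z3 tau') = tprepend (symt z3) (ptrace_sym tau').
Proof.
  destruct tau' as [l|s]; simpl.
  - rewrite symt_app. reflexivity.
  - f_equal. apply functional_extensionality. intros i. unfold symt. rewrite length_map.
    destruct (Nat.ltb_spec i (length z3)); auto. rewrite map_nth. reflexivity.
Qed.

Lemma tsplit_sym tau z1 tau' :
  tsplit tau z1 tau' -> tsplit (ptrace_sym tau) (symt z1) (ptrace_sym tau').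
Proof.
  destruct tau as [l|s], tau' as [l'|s']; simpl; try tauto.
  - intros ->. apply symt_app.
  - intros [E1 E2]. unfold symt. rewrite length_map. split.
    + rewrite E1 at 1. apply map_prefix.
    + intros i. rewrite E2. reflexivity.
Qed.

Lemma tsplit_sym_inv tau z1e tau'e : tsplit (ptrace_sym tau) z1e tau'e ->
  exists z1 tau', tsplit tau z1 tau' /\ symt z1 = z1e /\ ptrace_sym tau' = tau'e.
Proof.
  destruct tau as [l|s], tau'e as [l'e|s'e]; simpl; try tauto.
  - intros E. apply map_eq_app in E as [a [b [-> [Ea Eb]]]].
    exists a, (PFin b). simpl. subst. auto.
  - intros [E1 E2]. exists (prefix s (length z1e)), (PInf (fun i => s (length z1e + i)%nat)).
    simpl. rewrite prefix_length. repeat split.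
    + unfold symt. rewrite map_prefix. auto.
    + f_equal. apply functional_extensionality. auto.
Qed.

Lemma tsplit_nondecr zt tau z1 tau' :
  nondecr_from 0 zt -> ptrace_nondecr (last_time 0 zt) tau -> tsplit tau z1 tau' ->
  nondecr_from 0 (zt ++ z1) /\ ptrace_nondecr (last_time 0 (zt ++ z1)) tau' /\
  forall z2 z3, z1 = z2 ++ z3 ->
    nondecr_from 0 (zt ++ z2) /\ ptrace_nondecr (last_time 0 (zt ++ z2)) (tprepend z3 tau').
Proof.
  intros Hz Htau Hs. destruct (ptrace_nondecr_tsplit _ _ _ _ Hs Htau) as [Hz1 Htau'].
  rewrite <- last_time_app in Htau'.
  split; [apply nondecr_from_extend; auto|]. split; [auto|].
  intros z2 z3 ->. apply nondecr_from_app in Hz1 as [Hz2 Hz3].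
  split; [apply nondecr_from_extend; auto|].
  rewrite app_assoc, last_time_app in Htau'.
  apply ptrace_nondecr_tprepend; [rewrite last_time_app|]; assumption.
Qed.

(** * Program traces *)

Section Runs.
Variables (w : eworld) (wt : tworld).
Hypothesis Hext : time_ext w wt.
Variables (rho : env) (bnd : list (sort * nat)).
Hypothesis Hrho : sorted_env rho bnd.

Lemma tfinal_efinal zt d : esg_prog bnd d ->
  (tfinal wt rho (embed zt) d <-> efinal w rho (symt zt) d).
Proof.
  intros Hd. unfold tfinal, efinal. rewrite <- sym_embed.
  apply (final_agree _ _ bnd); auto.
  intros. eapply tsat_static_sym; eauto.
Qed.

Lemma astep_sym z d p d' : esg_prog bnd d ->
  (astep (den (fun f ns => tw_fun wt f ns z) rho) (tsat_static wt rho z) d p d' <->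
   astep (den (fun f ns => ew_fun w f ns (sym z)) rho) (esat_static w rho (sym z)) d p d').
Proof.
  intros Hd.
  assert (Hdn : forall t, noclock_term t -> wf_term bnd t SAct ->
    den (fun f ns => tw_fun wt f ns z) rho t = den (fun f ns => ew_fun w f ns (sym z)) rho t)
    by (intros; eapply den_sym; eauto).
  assert (Htst : forall a, static a -> esg_s a -> wf_s bnd a ->
    (tsat_static wt rho z a <-> esat_static w rho (sym z) a))
    by (intros; eapply tsat_static_sym; eauto).
  split; intros H; refine (astep_agree _ _ _ _ bnd _ _ d p d' H Hd); intros.
  - apply Hdn; auto.
  - apply Htst; auto.
  - symmetry. apply Hdn; auto.
  - symmetry. apply Htst; auto.
Qed.

Lemma tstep_estep zt d e d' : esg_prog bnd d -> tstep wt rho (embed zt) d e d' ->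
  estep w rho (symt zt) d (snd e) d' /\ last_time 0 zt <= fst e.
Proof.
  intros Hd [Ht Hs]. rewrite time_of_embed in Ht. split; auto.
  unfold estep. rewrite <- (sym_embed_time zt (fst e)). apply astep_sym; auto.
Qed.

Lemma estep_tstep zt d p d' T : esg_prog bnd d -> estep w rho (symt zt) d p d' ->
  last_time 0 zt <= T -> tstep wt rho (embed zt) d (T, p) d'.
Proof.
  intros Hd Hs Ht. split; [rewrite time_of_embed; auto|].
  apply astep_sym; auto. rewrite sym_embed_time. exact Hs.
Qed.

Lemma run_untime ls : forall zt d d', run text (tstep wt rho) (embed zt) d ls d' -> esg_prog bnd d ->
  run eext (estep w rho) (symt zt) d (symt ls) d' /\
  nondecr_from (last_time 0 zt) ls /\ esg_prog bnd d'.
Proof.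
  induction ls as [|e ls IH]; intros zt d d' H Hd;
    inversion H as [|? ? ? d1 ? ? Hstep Hrun]; subst.
  - split; [constructor | simpl; auto].
  - rewrite text_embed in Hrun. destruct (tstep_estep _ _ _ _ Hd Hstep) as [Hs Ht].
    assert (Hd1 : esg_prog bnd d1) by (eapply astep_esg_prog; [apply (proj2 Hstep)|]; auto).
    destruct (IH _ _ _ Hrun Hd1) as [A [B C]].
    rewrite last_time_snoc, symt_app in *. split; [econstructor; eauto | simpl; auto].
Qed.

Lemma run_time_at ls : forall zt d d' T, run eext (estep w rho) (symt zt) d ls d' -> esg_prog bnd d ->
  last_time 0 zt <= T -> run text (tstep wt rho) (embed zt) d (map (pair T) ls) d' /\ esg_prog bnd d'.
Proof.
  induction ls as [|p ls IH]; intros zt d d' T H Hd HT;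
    inversion H as [|? ? ? d1 ? ? Hstep Hrun]; subst.
  - split; [constructor | auto].
  - assert (Hd1 : esg_prog bnd d1) by (eapply astep_esg_prog; [apply Hstep|]; auto).
    replace (eext (symt zt) p) with (symt (zt ++ [(T, p)])) in Hrun by apply symt_app.
    destruct (IH _ _ _ T Hrun Hd1) as [A B]; [rewrite last_time_snoc; simpl; lra|].
    split; auto. econstructor.
    + apply estep_tstep; eauto.
    + rewrite text_embed. exact A.
Qed.

Lemma fin_trace_untime zt d ls : esg_prog bnd d ->
  fin_trace text (tstep wt rho) (tfinal wt rho) (embed zt) d ls ->
  fin_trace eext (estep w rho) (efinal w rho) (symt zt) d (symt ls) /\
  nondecr_from (last_time 0 zt) ls.
Proof.
  intros Hd [d' [Hrun Hfin]]. destruct (run_untime _ _ _ _ Hrun Hd) as [A [B C]].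
  split; auto. exists d'. split; auto.
  rewrite extend_text, tfinal_efinal, symt_app in Hfin by auto.
  rewrite extend_eext. exact Hfin.
Qed.

Lemma fin_trace_time_at zt d ls : esg_prog bnd d ->
  fin_trace eext (estep w rho) (efinal w rho) (symt zt) d ls ->
  fin_trace text (tstep wt rho) (tfinal wt rho) (embed zt) d (map (pair (last_time 0 zt)) ls).
Proof.
  intros Hd [d' [Hrun Hfin]].
  destruct (run_time_at _ _ _ _ (last_time 0 zt) Hrun Hd) as [A B]; [lra|].
  exists d'. split; auto.
  rewrite extend_text, tfinal_efinal, symt_time_at by auto.
  rewrite extend_eext in Hfin. exact Hfin.
Qed.

Lemma inf_trace_untime zt d s : esg_prog bnd d ->
  inf_trace text (tstep wt rho) (tfinal wt rho) (embed zt) d s ->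
  inf_trace eext (estep w rho) (efinal w rho) (symt zt) d (fun i => snd (s i)) /\
  ptrace_nondecr (last_time 0 zt) (PInf s).
Proof.
  intros Hd [ds [H0 H]].
  assert (Hds : forall i, esg_prog bnd (ds i)).
  { induction i; [subst; auto|]. destruct (H i) as [[_ A] _].
    eapply astep_esg_prog; eauto. }
  assert (Hst : forall i, estep w rho (symt (zt ++ prefix s i)) (ds i) (snd (s i)) (ds (S i))
             /\ last_time 0 (zt ++ prefix s i) <= fst (s i) /\
             ~ efinal w rho (symt (zt ++ prefix s i)) (ds i)).
  { intros i. destruct (H i) as [A B]. rewrite extend_text in A, B.
    destruct (tstep_estep _ _ _ _ (Hds i) A) as [C D].
    rewrite <- tfinal_efinal by auto. auto. }
  split.
  - exists ds. split; auto. intros i. rewrite extend_eext, <- map_prefix.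
    destruct (Hst i) as [A [_ C]]. rewrite symt_app in A, C. auto.
  - intros n. simpl. induction n.
    + exact I.
    + unfold prefix. rewrite seq_S, map_app, nondecr_from_app. split; [apply IHn|].
      destruct (Hst n) as [_ [B _]]. rewrite last_time_app in B. simpl. auto.
Qed.

Lemma inf_trace_time_at zt d s : esg_prog bnd d ->
  inf_trace eext (estep w rho) (efinal w rho) (symt zt) d s ->
  inf_trace text (tstep wt rho) (tfinal wt rho) (embed zt) d (fun i => (last_time 0 zt, s i)).
Proof.
  intros Hd [ds [H0 H]].
  assert (Hds : forall i, esg_prog bnd (ds i)).
  { induction i; [subst; auto|]. destruct (H i) as [A _].
    eapply astep_esg_prog; eauto. }
  exists ds. split; auto. intros i.
  rewrite extend_text, <- (map_prefix (pair (last_time 0 zt))).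
  destruct (H i) as [A B]. rewrite extend_eext, <- symt_time_at with (T := last_time 0 zt) in A, B.
  split.
  - apply estep_tstep; auto. rewrite last_time_app. apply last_time_const. lra.
  - rewrite tfinal_efinal; auto.
Qed.

Lemma in_traces_untime zt d tau : esg_prog bnd d ->
  in_traces text (tstep wt rho) (tfinal wt rho) (embed zt) d tau ->
  in_traces eext (estep w rho) (efinal w rho) (symt zt) d (ptrace_sym tau) /\
  ptrace_nondecr (last_time 0 zt) tau.
Proof.
  destruct tau as [l|s]; simpl; intros Hd H.
  - destruct (fin_trace_untime _ _ _ Hd H). split; auto. apply ptrace_nondecr_fin; auto.
  - apply inf_trace_untime; auto.
Qed.

Lemma in_traces_time_at zt d tau : esg_prog bnd d ->
  in_traces eext (estep w rho) (efinal w rho) (symt zt) d tau ->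
  in_traces text (tstep wt rho) (tfinal wt rho) (embed zt) d (ptrace_at (last_time 0 zt) tau).
Proof.
  destruct tau as [l|s]; simpl; intros Hd H.
  - apply fin_trace_time_at; auto.
  - apply inf_trace_time_at; auto.
Qed.
End Runs.

(** * The transfer induction *)

Lemma tsat_tsat_static wt rho z a : static a -> (tsat wt rho z a <-> tsat_static wt rho z a).
Proof.
  revert rho. induction a; intros rho Hs; simpl in *; try tauto.
  - rewrite IHa1, IHa2 by tauto. tauto.
  - rewrite IHa by tauto. tauto.
  - split; intros H n Hn; apply IHa; auto.
Qed.

Lemma esat_esat_static w rho z a : static a -> (esat w rho z a <-> esat_static w rho z a).
Proof.
  revert rho. induction a; intros rho Hs; simpl in *; try tauto.
  - rewrite IHa1, IHa2 by tauto. tauto.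
  - rewrite IHa by tauto. tauto.
  - split; intros H n Hn; apply IHa; auto.
Qed.

Lemma in_interval_esg Iv r : until_esg Iv -> 0 <= r -> in_interval Iv r.
Proof. unfold in_interval. intros [-> [-> ->]] Hr. split; [simpl; lra | exact I]. Qed.

Scheme sform_mut := Induction for sform Sort Prop
with tform_mut := Induction for tform Sort Prop.

Section Transfer.
Variables (w : eworld) (wt : tworld).
Hypothesis Hext : time_ext w wt.

Definition transfer_s (a : sform) : Prop :=
  forall bnd rho zt, wf_s bnd a -> esg_s a -> sorted_env rho bnd -> nondecr_from 0 zt ->
  (esat w rho (symt zt) a <-> tsat wt rho (embed zt) a).

Definition transfer_t (phi : tform) : Prop :=
  forall bnd rho zt tau, wf_t bnd phi -> esg_t phi -> sorted_env rho bnd ->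
  nondecr_from 0 zt -> ptrace_nondecr (last_time 0 zt) tau ->
  (esat_tr w rho (symt zt) (ptrace_sym tau) phi <-> tsat_tr wt rho (embed zt) tau phi).

Lemma transfer_static a : static a -> transfer_s a.
Proof.
  intros Hs bnd rho zt Hw He Hrho _.
  rewrite esat_esat_static, tsat_tsat_static, <- sym_embed by auto.
  symmetry. eapply tsat_static_sym; eauto.
Qed.

Lemma transfer_and a b : transfer_s a -> transfer_s b -> transfer_s (SAnd a b).
Proof.
  intros IHa IHb bnd rho zt [Wa Wb] [Ea Eb] Hrho Hz; simpl.
  rewrite (IHa bnd rho), (IHb bnd rho) by auto. tauto.
Qed.

Lemma transfer_neg a : transfer_s a -> transfer_s (SNeg a).
Proof.
  intros IH bnd rho zt Hw He Hrho Hz; simpl.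
  rewrite (IH bnd rho) by auto. tauto.
Qed.

Lemma transfer_all s x a : transfer_s a -> transfer_s (SAll s x a).
Proof.
  intros IH bnd rho zt Hw [_ He] Hrho Hz; simpl.
  split; intros H n Hn; specialize (H n Hn); eapply IH; eauto using sorted_env_upd.
Qed.

Lemma transfer_box a : transfer_s a -> transfer_s (SBox a).
Proof.
  intros IH bnd rho zt Hw He Hrho Hz; simpl. split.
  - intros H z' Hv. unfold tvalid in Hv. rewrite <- embed_app, tvalid_from_embed in Hv.
    rewrite <- embed_app, <- (IH bnd rho), symt_app; auto.
  - intros H z'. specialize (H (map (pair (last_time 0 zt)) z')).
    rewrite <- embed_app in H.
    rewrite <- (symt_time_at zt (last_time 0 zt)), (IH bnd rho); auto using nondecr_from_time_at.
    apply H. apply tvalid_from_embed, nondecr_from_time_at; auto.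
Qed.

Lemma transfer_br d a : transfer_s a -> transfer_s (SBr d a).
Proof.
  intros IH bnd rho zt [Wd Wa] [Ed Ea] Hrho Hz; simpl.
  assert (Hd : esg_prog bnd d) by (split; auto).
  split.
  - intros H ls Hf. destruct (fin_trace_untime w wt Hext rho bnd Hrho zt d ls Hd Hf) as [A B].
    specialize (H _ A). rewrite extend_eext, <- symt_app in H.
    rewrite extend_text, <- (IH bnd rho); auto using nondecr_from_extend.
  - intros H ls Hf. specialize (H _ (fin_trace_time_at w wt Hext rho bnd Hrho zt d ls Hd Hf)).
    rewrite extend_text in H.
    rewrite extend_eext, <- (symt_time_at zt (last_time 0 zt)), (IH bnd rho);
      auto using nondecr_from_time_at.
Qed.

Lemma transfer_tr d phi : transfer_t phi -> transfer_s (STr d phi).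
Proof.
  intros IH bnd rho zt [Wd Wp] [Ed Ep] Hrho Hz; simpl.
  assert (Hd : esg_prog bnd d) by (split; auto).
  split.
  - intros H tau Htau.
    destruct (in_traces_untime w wt Hext rho bnd Hrho zt d tau Hd Htau) as [A B].
    apply (IH bnd rho); auto.
  - intros H tau Htau. rewrite <- (ptrace_sym_at (last_time 0 zt) tau).
    apply (IH bnd rho); auto using ptrace_nondecr_at, Rle_refl.
    apply H, (in_traces_time_at w wt Hext rho bnd); auto.
Qed.

Lemma transfer_trfin d phi : transfer_t phi -> transfer_s (STrFin d phi).
Proof.
  intros IH bnd rho zt [Wd Wp] [Ed Ep] Hrho Hz; simpl.
  assert (Hd : esg_prog bnd d) by (split; auto).
  split.
  - intros H ls Hf. destruct (fin_trace_untime w wt Hext rho bnd Hrho zt d ls Hd Hf) as [A B].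
    apply (IH bnd rho zt (PFin ls)); auto using ptrace_nondecr_fin. exact (H _ A).
  - intros H ls Hf. rewrite <- (ptrace_sym_at (last_time 0 zt) (PFin ls)).
    apply (IH bnd rho); auto using ptrace_nondecr_at, Rle_refl.
    apply H, (fin_trace_time_at w wt Hext rho bnd); auto.
Qed.

Lemma transfer_sit a : transfer_s a -> transfer_t (TSit a).
Proof. intros IH bnd rho zt tau Hw He Hrho Hz _. exact (IH bnd rho zt Hw He Hrho Hz). Qed.

Lemma transfer_tand p q : transfer_t p -> transfer_t q -> transfer_t (TAnd p q).
Proof.
  intros IHp IHq bnd rho zt tau [Wp Wq] [Ep Eq] Hrho Hz Htau; simpl.
  rewrite (IHp bnd rho), (IHq bnd rho) by auto. tauto.
Qed.

Lemma transfer_tneg p : transfer_t p -> transfer_t (TNeg p).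
Proof.
  intros IH bnd rho zt tau Hw He Hrho Hz Htau; simpl.
  rewrite (IH bnd rho) by auto. tauto.
Qed.

Lemma transfer_tall s x p : transfer_t p -> transfer_t (TAll s x p).
Proof.
  intros IH bnd rho zt tau Hw [_ He] Hrho Hz Htau; simpl.
  split; intros H n Hn; specialize (H n Hn); eapply IH; eauto using sorted_env_upd.
Qed.

Lemma transfer_until Iv p q : transfer_t p -> transfer_t q -> transfer_t (TUntil Iv p q).
Proof.
  intros IHp IHq bnd rho zt tau [Wp Wq] [HIv [Ep Eq]] Hrho Hz Htau; simpl. split.
  - intros [z1e [tau'e [Hne [Hs [Hq Hp]]]]].
    destruct (tsplit_sym_inv _ _ _ Hs) as [z1 [tau' [Hs' [<- <-]]]].
    destruct (tsplit_nondecr _ _ _ _ Hz Htau Hs') as [Hz1 [Htau' Hz23]].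
    exists z1, tau'. rewrite <- !embed_app.
    refine (conj _ (conj Hs' (conj _ (conj _ _)))).
    + intros ->. apply Hne. reflexivity.
    + rewrite <- symt_app in Hq. apply (IHq bnd rho); auto.
    + apply in_interval_esg; auto. rewrite !time_of_embed, last_time_app.
      apply nondecr_from_app in Hz1 as [_ Hz1]. apply nondecr_from_last_time in Hz1. lra.
    + intros z2 z3 N2 N3 ->. destruct (Hz23 z2 z3 eq_refl) as [Hz2 Htau3].
      rewrite <- embed_app. apply (IHp bnd rho); auto.
      rewrite ptrace_sym_tprepend, symt_app. apply Hp.
      * intros E. apply N2, map_eq_nil with (f := snd), E.
      * intros E. apply N3, map_eq_nil with (f := snd), E.
      * apply symt_app.
  - intros [z1 [tau' [Hne [Hs [Hq [_ Hp]]]]]].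
    destruct (tsplit_nondecr _ _ _ _ Hz Htau Hs) as [Hz1 [Htau' Hz23]].
    exists (symt z1), (ptrace_sym tau').
    refine (conj _ (conj _ (conj _ _))).
    + intros E. apply Hne, map_eq_nil with (f := snd), E.
    + apply tsplit_sym; auto.
    + rewrite <- symt_app. rewrite <- embed_app in Hq. apply (IHq bnd rho); auto.
    + intros z2e z3e N2 N3 Ez.
      apply map_eq_app in Ez as [z2 [z3 [-> [<- <-]]]].
      destruct (Hz23 z2 z3 eq_refl) as [Hz2 Htau3].
      rewrite <- symt_app, <- ptrace_sym_tprepend. apply (IHp bnd rho); auto.
      rewrite embed_app. apply Hp; auto; intros ->; auto.
Qed.

Lemma transfer_esg a : transfer_s a.
Proof.
  apply (sform_mut transfer_s transfer_t); intros;
    try (apply transfer_static; exact I);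
    auto using transfer_and, transfer_neg, transfer_all, transfer_box,
      transfer_br, transfer_tr, transfer_trfin, transfer_sit, transfer_tand, transfer_tneg,
      transfer_tall, transfer_until.
Qed.
End Transfer.

Theorem mainTheorem3 (w : eworld) (wt : tworld) (alpha : sform) (zt : list (R * nat)) :
  eworld_ok w ->
  time_ext w wt ->
  esg_sentence alpha ->
  tvalid (embed zt) ->
  (esat w env0 (symt zt) alpha <-> tsat wt env0 (embed zt) alpha).
Proof.
  intros _ Hext [Hw He] Hv.
  unfold tvalid in Hv. rewrite tvalid_from_embed in Hv.
  exact (transfer_esg w wt Hext alpha [] env0 zt Hw He (sorted_env_nil env0) Hv).
Qed.
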